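(* Let $(W,S)$ be a Coxeter system of rank $n$ with set of reflections $T$, $(s_1,\dots,s_n)$ an ordering of $S$, $h=s_1\cdots s_n$, and let $\Psi:\mathrm{Art}(W,S)\to\mathrm{Art}^*(W,T,h)$ be the group morphism with $\bar s_i\mapsto\{s_i\}$. If $\Psi$ is an isomorphism, then $(W,(s_1,\dots,s_n))$ is well-stabilized.
   Context: A Coxeter system $(W,S)$: $W=\langle S\mid (ss')^{m(s,s')}=1\text{ whenever } m(s,s')\neq\infty\rangle$ with $m$ symmetric, $m(s,s)=1$, $m(s,s')\in\{2,3,\dots,\infty\}$ for $s\neq s'$; $T$ is the set of conjugates of elements of $S$. For $a\in W$: $\ell_T(a)$ is the minimal $k$ with $a=t_1\cdots t_k$, $t_i\in T$; $\mathrm{Red}_T(a)$ is the set of such tuples of length $\ell_T(a)$; $a\le_T b$ iff $\ell_T(a)+\ell_T(a^{-1}b)=\ell_T(b)$; $[1,h]_T=\{a:a\le_T h\}$. $\mathrm{Art}(W,S)$ is generated by $\bar s_1,\dots,\bar s_n$ subject to $\bar s_i\bar s_j\bar s_i\cdots=\bar s_j\bar s_i\bar s_j\cdots$ (each side with $m(s_i,s_j)$ factors) for $i<j$ with $m(s_i,s_j)\neq\infty$. $\mathrm{Art}^*(W,T,h)$ is generated by symbols $\{t\}$, $t\in T\cap[1,h]_T$, subject to $\{t_1\}\cdots\{t_k\}=\{t'_1\}\cdots\{t'_k\}$ for all $a\in[1,h]_T$ and $(t_1,\dots,t_k),(t'_1,\dots,t'_k)\in\mathrm{Red}_T(a)$;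 $\Psi$ is a well-defined morphism. The braid group $B_n$ acts on $G^n$ by the Hurwitz action $\sigma_i\cdot(g_1,\dots,g_n)=(g_1,\dots,g_{i-1},g_ig_{i+1}g_i^{-1},g_i,g_{i+2},\dots,g_n)$. $(W,(s_1,\dots,s_n))$ is well-stabilized if the stabilizer in $B_n$ of $(s_1,\dots,s_n)\in W^n$ equals the stabilizer of $(\bar s_1,\dots,\bar s_n)\in\mathrm{Art}(W,S)^n$. *)

From mathcomp Require Import all_boot.
Set Implicit Arguments. Unset Strict Implicit. Unset Printing Implicit Defensive.

(* A word over generators X: letters (x, true) = x, (x, false) = x^-1. *)
Definition fword (X : Type) := seq (X * bool).

Definition finv (X : Type) (w : fword X) : fword X :=
  rev (map (fun p => (p.1, ~~ p.2)) w).

Inductive pres_eq (X : Type) (R : fword X -> fword X -> Prop) :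
    fword X -> fword X -> Prop :=
| pres_refl u : pres_eq R u u
| pres_sym u v : pres_eq R u v -> pres_eq R v u
| pres_trans u v w : pres_eq R u v -> pres_eq R v w -> pres_eq R u w
| pres_free u v x b : pres_eq R (u ++ (x, b) :: (x, ~~ b) :: v) (u ++ v)
| pres_rel u v l r : R l r -> pres_eq R (u ++ l ++ v) (u ++ r ++ v).

(* m i j = None encodes m(s_i,s_j) = infinity. *)
Definition coxeter_matrix (n : nat) (m : 'I_n -> 'I_n -> option nat) : Prop :=
  (forall i j, m i j = m j i) /\ (forall i, m i i = Some 1) /\
  (forall i j k, i != j -> m i j = Some k -> 2 <= k).

Definition cox_rel (n : nat) (m : 'I_n -> 'I_n -> option nat)
    (l r : fword 'I_n) : Prop :=
  exists i j k, m i j = Some k /\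
    l = flatten (nseq k [:: (i, true); (j, true)]) /\ r = [::].

Definition cox_eq (n : nat) (m : 'I_n -> 'I_n -> option nat) :=
  pres_eq (cox_rel m).

Definition alt (n : nat) (i j : 'I_n) (k : nat) : fword 'I_n :=
  mkseq (fun t => (if odd t then j else i, true)) k.

Definition art_rel (n : nat) (m : 'I_n -> 'I_n -> option nat)
    (l r : fword 'I_n) : Prop :=
  exists (i j : 'I_n) k, (i < j)%N /\ m i j = Some k /\
    l = alt i j k /\ r = alt j i k.

Definition art_eq (n : nat) (m : 'I_n -> 'I_n -> option nat) :=
  pres_eq (art_rel m).

Section Refl.
Variables (n : nat) (m : 'I_n -> 'I_n -> option nat).

Definition is_refl (w : fword 'I_n) : Prop :=
  exists (x : fword 'I_n) (i : 'I_n), cox_eq m (x ++ (i, true) :: finv x) w.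

Definition T_decomp (a : fword 'I_n) (ts : seq (fword 'I_n)) : Prop :=
  (forall k, k < size ts -> is_refl (nth [::] ts k)) /\
  cox_eq m (flatten ts) a.

Definition T_len (a : fword 'I_n) (k : nat) : Prop :=
  (exists ts, size ts = k /\ T_decomp a ts) /\
  (forall ts, T_decomp a ts -> k <= size ts).

Definition red_T (a : fword 'I_n) (ts : seq (fword 'I_n)) : Prop :=
  T_decomp a ts /\ (forall ts', T_decomp a ts' -> size ts <= size ts').

Definition le_T (a b : fword 'I_n) : Prop :=
  exists k1 k2 k3, T_len a k1 /\ T_len (finv a ++ b) k2 /\ T_len b k3 /\
    k1 + k2 = k3.

Definition cox_h : fword 'I_n := map (fun i => (i, true)) (enum 'I_n).

(* generators {t}, t in T cap [1,h]_T (t given by a representative word;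
   representatives of the same element of W are identified by relations) *)
Definition dgen := {u : fword 'I_n | is_refl u /\ le_T u cox_h}.

Definition dual_rel (l r : fword dgen) : Prop :=
  (exists g g' : dgen, cox_eq m (proj1_sig g) (proj1_sig g') /\
     l = [:: (g, true)] /\ r = [:: (g', true)]) \/
  (exists (a : fword 'I_n) (gs gs' : seq dgen), le_T a cox_h /\
     red_T a (map (@proj1_sig _ _) gs) /\ red_T a (map (@proj1_sig _ _) gs') /\
     l = map (fun g => (g, true)) gs /\ r = map (fun g => (g, true)) gs').

Definition dual_eq := pres_eq dual_rel.

(* Psi : Art(W,S) -> Art*(W,T,h), s_i |-> {s_i}: v represents Psi(u) *)
Definition psi_rel (u : fword 'I_n) (v : fword dgen) : Prop :=
  map (fun p => (proj1_sig p.1, p.2)) v = map (fun p => ([:: (p.1, true)], p.2)) u.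

Definition psi_iso : Prop :=
  (forall u u' v v', psi_rel u v -> psi_rel u' v' -> dual_eq v v' -> art_eq m u u') /\
  (forall v, exists u v', psi_rel u v' /\ dual_eq v v').

End Refl.

(* braid letter (i, true) = sigma_{i+1}, (i, false) = sigma_{i+1}^-1 (0-based) *)
Definition hstep (X : Type) (p : nat * bool) (gs : seq (fword X)) : seq (fword X) :=
  let i := p.1 in
  let gi := nth [::] gs i in
  let gj := nth [::] gs i.+1 in
  if p.2 then set_nth [::] (set_nth [::] gs i (gi ++ gj ++ finv gi)) i.+1 gi
  else set_nth [::] (set_nth [::] gs i gj) i.+1 (finv gj ++ gi ++ gj).

Definition hact (X : Type) (beta : seq (nat * bool)) (gs : seq (fword X)) :=
  foldr (@hstep X) gs beta.

Definition tuple_eq (X : Type) (E : fword X -> fword X -> Prop)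
    (gs gs' : seq (fword X)) : Prop :=
  size gs = size gs' /\
  forall k, k < size gs -> E (nth [::] gs k) (nth [::] gs' k).

Definition sgen (n : nat) : seq (fword 'I_n) :=
  map (fun i => [:: (i, true)]) (enum 'I_n).

Definition well_stabilized (n : nat) (m : 'I_n -> 'I_n -> option nat) : Prop :=
  forall beta : seq (nat * bool), all (fun p => p.1.+1 < n) beta ->
    (tuple_eq (cox_eq m) (hact beta (sgen n)) (sgen n) <->
     tuple_eq (art_eq m) (hact beta (sgen n)) (sgen n)).

(* A Hurwitz move replaces two adjacent entries (a, b) of a tuple by (a b a^-1, a) or
   (b, b^-1 a b) without changing their product. Starting from (s_1, ..., s_n), every tuple
   of the Hurwitz orbit in W is thus a factorisation of h into n reflections, and it is
   T-reduced because l_T(h) = n; the lower bound comes from a linear representation rho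
   of W in which 1 - rho(t) has rank at most 1 for every reflection t while 1 - rho(h) has
   rank at least n. Hence every adjacent pair is a reduced factorisation of an element
   below h, so each Hurwitz move is matched in Art*(W,T,h) by a defining relation
   {a}{b} = {a b a^-1}{a}. By induction along the braid, Psi maps the i-th entry of
   beta.(s_1, ..., s_n) in Art(W,S) to the generator {t_i}, t_i being the i-th entry of
   the same braid orbit in W. If beta fixes (s_1, ..., s_n) in W, then {t_i} = {s_i}, and
   injectivity of Psi gives the equality in Art(W,S); the converse holds because W is a
   quotient of Art(W,S). *)

From mathcomp Require Import all_boot all_algebra all_field.
From mathcomp Require Import ring.
From Stdlib Require List.
Set Implicit Arguments. Unset Strict Implicit. Unset Printing Implicit Defensive.
Import GRing.Theory.

Section Presentation.
Variables (X : Type) (R : fword X -> fword X -> Prop).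
Notation PE := (pres_eq R).

Lemma pres_eq_ctx a b u v : PE u v -> PE (a ++ u ++ b) (a ++ v ++ b).
Proof.
elim=> {u v} [u | u v _ | u v w _ H1 _ | u v x c | u v l r Hr].
- exact: pres_refl.
- exact: pres_sym.
- exact: pres_trans H1.
- by move: (pres_free R (a ++ u) (v ++ b) x c); rewrite -!catA.
- by move: (pres_rel (a ++ u) (v ++ b) Hr); rewrite -!catA.
Qed.

Lemma pres_eq_cat u u' v v' : PE u u' -> PE v v' -> PE (u ++ v) (u' ++ v').
Proof.
move=> Hu Hv; apply: (@pres_trans _ _ _ (u' ++ v)).
  by move: (pres_eq_ctx [::] v Hu).
by move: (pres_eq_ctx u' [::] Hv); rewrite !cats0.
Qed.

Lemma finv_cat (u v : fword X) : finv (u ++ v) = finv v ++ finv u.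
Proof. by rewrite /finv map_cat rev_cat. Qed.

Lemma finv_cons (p : X * bool) u : finv (p :: u) = finv u ++ [:: (p.1, ~~ p.2)].
Proof. by rewrite /finv /= rev_cons cats1. Qed.

Lemma finvK : involutive (@finv X).
Proof.
move=> u; rewrite /finv map_rev revK -map_comp.
by elim: u => [|[x b] u IH] //=; rewrite negbK IH.
Qed.

Lemma pres_eq_catV u : PE (u ++ finv u) [::].
Proof.
elim: u => [|[x b] u IH] /=; first exact: pres_refl.
rewrite finv_cons /= catA.
apply: (@pres_trans _ _ _ ([:: (x, b)] ++ [::] ++ [:: (x, ~~ b)])).
  exact: (pres_eq_ctx [:: (x, b)] [:: (x, ~~ b)] IH).
exact: (pres_free R [::] [::] x b).
Qed.

Lemma pres_eq_Vcat u : PE (finv u ++ u) [::].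
Proof. by move: (pres_eq_catV (finv u)); rewrite finvK. Qed.

Lemma pres_eq_catKV u w : PE (u ++ finv u ++ w) w.
Proof. by rewrite catA; move: (pres_eq_cat (pres_eq_catV u) (pres_refl R w)). Qed.

Lemma pres_eq_catK u w : PE (finv u ++ u ++ w) w.
Proof. by move: (pres_eq_catKV (finv u) w); rewrite finvK. Qed.

Lemma pres_eq_catrKV u w : PE (w ++ finv u ++ u) w.
Proof. by move: (pres_eq_cat (pres_refl R w) (pres_eq_Vcat u)); rewrite cats0. Qed.

Lemma pres_eq_catrK u w : PE (w ++ u ++ finv u) w.
Proof. by move: (pres_eq_catrKV (finv u) w); rewrite finvK. Qed.

Lemma pres_eq_finv u v : PE u v -> PE (finv u) (finv v).
Proof.
move=> Huv; apply: (@pres_trans _ _ _ (finv u ++ v ++ finv v)).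
  exact/pres_sym/pres_eq_catrK.
apply: (@pres_trans _ _ _ (finv u ++ u ++ finv v)); last exact: pres_eq_catK.
exact: pres_eq_ctx (pres_sym Huv).
Qed.

End Presentation.

Definition hurwitz_pair (X : Type) (c : bool) (a b : fword X) : fword X * fword X :=
  if c then (a ++ b ++ finv a, a) else (b, finv b ++ a ++ b).

Lemma hstep_cat (X : Type) (pre : seq (fword X)) a b post c :
  hstep (size pre, c) (pre ++ a :: b :: post) =
  pre ++ (hurwitz_pair c a b).1 :: (hurwitz_pair c a b).2 :: post.
Proof. by elim: pre => [|x pre IH]; [case: c | move: IH; rewrite /hstep /=; case: c => /= ->]. Qed.

Definition map_word (X Y : Type) (f : X -> Y) (u : fword X) : fword Y :=
  map (fun p => (f p.1, p.2)) u.

Lemma map_word_hurwitz_pair (X Y : Type) (f : X -> Y) c a b :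
  hurwitz_pair c (map_word f a) (map_word f b) =
  (map_word f (hurwitz_pair c a b).1, map_word f (hurwitz_pair c a b).2).
Proof.
have map_finv u : finv (map_word f u) = map_word f (finv u).
  by rewrite /finv /map_word map_rev -!map_comp.
by case: c; rewrite /= /map_word !map_cat -!/(map_word _ _) map_finv.
Qed.

Section HurwitzPairs.
Variables (X : Type) (R : fword X -> fword X -> Prop).
Notation PE := (pres_eq R).

Lemma hurwitz_pair_prod c a b : PE ((hurwitz_pair c a b).1 ++ (hurwitz_pair c a b).2) (a ++ b).
Proof.
case: c => /=; last exact: pres_eq_catKV.
by rewrite -!catA catA; apply: pres_eq_catrKV.
Qed.

Lemma hurwitz_pair_congr c a a' b b' : PE a a' -> PE b b' ->
  PE (hurwitz_pair c a b).1 (hurwitz_pair c a' b').1 /\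
  PE (hurwitz_pair c a b).2 (hurwitz_pair c a' b').2.
Proof.
move=> Ha Hb; case: c => /=; split=> //.
  exact/pres_eq_cat/pres_eq_cat/pres_eq_finv.
exact/pres_eq_cat/pres_eq_cat/Hb/Ha/pres_eq_finv.
Qed.

Lemma hurwitz_pair_solve c a b x y : PE (a ++ b) (x ++ y) ->
  (if c then PE y a else PE x b) ->
  PE (hurwitz_pair c a b).1 x /\ PE (hurwitz_pair c a b).2 y.
Proof.
move=> Hab; case: c => /= H; split; try exact: pres_sym.
  apply: (@pres_trans _ _ _ (x ++ y ++ finv a)).
    by rewrite catA [in X in PE _ X]catA; apply: pres_eq_cat Hab (pres_refl _ _).
  apply: (@pres_trans _ _ _ (x ++ a ++ finv a)); last exact: pres_eq_catrK.
  by apply: pres_eq_ctx.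
apply: (@pres_trans _ _ _ (finv b ++ x ++ y)); first exact: pres_eq_cat (pres_refl _ _) Hab.
apply: (@pres_trans _ _ _ (finv b ++ b ++ y)); last exact: pres_eq_catK.
exact: pres_eq_ctx.
Qed.

End HurwitzPairs.

Lemma Forall2_size (A B : Type) (P : A -> B -> Prop) s t :
  List.Forall2 P s t -> size s = size t.
Proof. by elim=> //= x y s' t' _ _ ->. Qed.

Lemma Forall2_nth_ex (A B : Type) (P : A -> B -> Prop) (x0 : A) s t k :
  List.Forall2 P s t -> k < size s -> exists y, P (nth x0 s k) y.
Proof. by move=> st; elim: st k => // x y s' t' Pxy _ IH [|k] /= lt_k; [exists y | apply: IH]. Qed.

Section CoxeterWords.
Variables (n : nat) (m : 'I_n -> 'I_n -> option nat).
Hypothesis Hm : coxeter_matrix m.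
Notation CE := (cox_eq m).

Definition pos_word (w : fword 'I_n) : fword 'I_n := map (fun p => (p.1, true)) w.

Lemma cox_eq_letterV i : CE [:: (i, false)] [:: (i, true)].
Proof.
have Rii : cox_rel m [:: (i, true); (i, true)] [::].
  by exists i, i, 1; rewrite Hm.2.1.
apply: (@pres_trans _ _ _ ([:: (i, false)] ++ [:: (i, true); (i, true)] ++ [::])).
  exact: pres_sym (pres_rel [:: (i, false)] [::] Rii).
exact: (pres_free _ [::] [:: (i, true)] i false).
Qed.

Lemma cox_eq_pos_word w : CE w (pos_word w).
Proof.
elim: w => [|[i b] w IH] /=; first exact: pres_refl.
rewrite -cat1s -[(i, true) :: _]cat1s; apply: pres_eq_cat IH.
by case: b; [apply: pres_refl | apply: cox_eq_letterV].
Qed.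

Lemma altS (i j : 'I_n) k : alt i j k.+1 = (i, true) :: alt j i k.
Proof.
rewrite /alt /mkseq /= -[1]/(1 + 0) iotaDl -map_comp.
by congr (_ :: _); apply: eq_map => t /=; case: (odd t).
Qed.

Lemma alt_cat_rev (i j : 'I_n) k :
  alt i j k ++ rev (alt j i k) = flatten (nseq k [:: (i, true); (j, true)]).
Proof.
elim: k i j => [|k IH] i j //.
rewrite !altS rev_cons -cats1 /= catA IH.
by elim: k {IH} => //= k ->.
Qed.

Lemma art_rel_cox_eq l r : art_rel m l r -> CE l r.
Proof.
case=> i [j [k [_ [mij [-> ->]]]]].
set u := alt i j k; set v := alt j i k.
have pos_alt x y : pos_word (alt x y k) = alt x y k by rewrite /pos_word -map_comp.
have uv1 : CE (u ++ finv v) [::].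
  apply: pres_trans (cox_eq_pos_word _) _.
  rewrite /pos_word map_cat /finv map_rev -map_comp.
  rewrite -[map _ u]/(pos_word u) -[map _ v]/(pos_word v) !pos_alt alt_cat_rev.
  have Rij : cox_rel m (flatten (nseq k [:: (i, true); (j, true)])) [::] by exists i, j, k.
  by move: (pres_rel [::] [::] Rij); rewrite /= cats0.
apply: (@pres_trans _ _ _ ((u ++ finv v) ++ v)).
  by rewrite -catA; apply: pres_sym; apply: pres_eq_catrKV.
by move: (pres_eq_cat uv1 (pres_refl _ v)).
Qed.

Lemma art_eq_cox_eq u v : art_eq m u v -> CE u v.
Proof.
elim=> {u v} [u | u v _ | u v w _ H1 _ | u v x b | u v l r Hr].
- exact: pres_refl.
- exact: pres_sym.
- exact: pres_trans H1.
- exact: pres_free.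
- exact/pres_eq_ctx/art_rel_cox_eq.
Qed.

End CoxeterWords.

Section ReflectionFactorisations.
Variables (n : nat) (m : 'I_n -> 'I_n -> option nat).
Notation CE := (cox_eq m).
Notation word := (fword 'I_n).

Definition all_refl (ts : seq word) := forall k, k < size ts -> is_refl m (nth [::] ts k).

Lemma all_refl_cat s t : all_refl (s ++ t) <-> all_refl s /\ all_refl t.
Proof.
split=> [st | [Hs Ht] k]; last first.
  rewrite size_cat nth_cat; case: (ltnP k (size s)) => [lt_ks _ | le_sk lt_kst]; first exact: Hs.
  by apply: Ht; rewrite -(ltn_add2l (size s)) subnKC.
split=> k Hk; first by move: (st k); rewrite size_cat nth_cat Hk; apply; apply: ltn_addr.
have skF : (size s + k < size s) = false by rewrite ltnNge leq_addr.
by move: (st (size s + k)); rewrite size_cat nth_cat ltn_add2l addKn skF; apply.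
Qed.

Lemma all_refl_cons t s : all_refl (t :: s) <-> is_refl m t /\ all_refl s.
Proof.
split=> [Hts | [Ht Hs] [|k] //= /Hs //].
by split=> [|k]; [apply: (Hts 0) | apply: (Hts k.+1)].
Qed.

Lemma is_refl_conj y t : is_refl m t -> is_refl m (y ++ t ++ finv y).
Proof.
case=> x [i Hx]; exists (y ++ x), i.
have -> : (y ++ x) ++ (i, true) :: finv (y ++ x) = y ++ (x ++ (i, true) :: finv x) ++ finv y.
  by rewrite finv_cat -!catA.
exact: pres_eq_ctx.
Qed.

Lemma T_decomp_cox_eq a b ts : CE a b -> T_decomp m a ts -> T_decomp m b ts.
Proof. by move=> Hab [Hts Ha]; split=> //; apply: pres_trans Ha Hab. Qed.

Lemma T_decomp_cat a b s t :
  T_decomp m a s -> T_decomp m b t -> T_decomp m (a ++ b) (s ++ t).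
Proof.
move=> [Hs Ha] [Ht Hb]; split; first exact/all_refl_cat.
by rewrite flatten_cat; apply: pres_eq_cat.
Qed.

Lemma T_decomp_flatten ts : all_refl ts -> T_decomp m (flatten ts) ts.
Proof. by split=> //; apply: pres_refl. Qed.

Lemma flatten_conj a ts :
  CE (flatten (map (fun t => finv a ++ t ++ a) ts)) (finv a ++ flatten ts ++ a).
Proof.
elim: ts => [|t ts IH] /=; first exact/pres_sym/pres_eq_Vcat.
apply: pres_trans (pres_eq_cat (pres_refl _ (finv a ++ t ++ a)) IH) _.
rewrite -!catA; do 2!apply: pres_eq_cat (pres_refl _ _) _.
exact: pres_eq_catKV.
Qed.

Lemma red_T_same_size a ts ts' :
  red_T m a ts -> T_decomp m a ts' -> size ts' = size ts -> red_T m a ts'.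
Proof. by move=> [_ min_ts] Hts' eq_size; split=> // ts'' /min_ts; rewrite eq_size. Qed.

Lemma red_T_size a s t : red_T m a s -> red_T m a t -> size s = size t.
Proof. by move=> [Hs min_s] [Ht min_t]; apply/eqP; rewrite eqn_leq min_s ?min_t. Qed.

Lemma T_len_red_T a ts : red_T m a ts -> T_len m a (size ts).
Proof. by move=> [Hts min_ts]; split=> //; exists ts. Qed.

Section Blocks.
Variables (a : word) (pre mid post : seq word).
Hypothesis red_a : red_T m a (pre ++ mid ++ post).

Lemma T_decomp_block_min ts : T_decomp m (flatten mid) ts -> size mid <= size ts.
Proof.
move=> Hts; have [[/all_refl_cat [Hpre /all_refl_cat [_ Hpost]] Ha] min_a] := red_a.
have : T_decomp m a (pre ++ ts ++ post).
  apply: (T_decomp_cox_eq Ha); rewrite !flatten_cat.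
  by do ![apply: T_decomp_cat | apply: T_decomp_flatten].
by move/min_a; rewrite !size_cat leq_add2l leq_add2r.
Qed.

Lemma red_T_block : red_T m (flatten mid) mid.
Proof.
have [[/all_refl_cat [_ /all_refl_cat [Hmid _]] _] _] := red_a.
by split; [apply: T_decomp_flatten | apply: T_decomp_block_min].
Qed.

Lemma le_T_block : le_T m (flatten mid) a.
Proof.
have [[/all_refl_cat [Hpre /all_refl_cat [Hmid Hpost]] Ha] min_a] := red_a.
set b := flatten mid.
exists (size mid), (size pre + size post), (size (pre ++ mid ++ post)).
split; first exact/T_len_red_T/red_T_block.
split; last by split; [apply: T_len_red_T | rewrite !size_cat addnCA].
split.
  exists (map (fun t => finv b ++ t ++ b) pre ++ post); split; first by rewrite size_cat size_map.
  split.
    apply/all_refl_cat; split=> // k; rewrite size_map => Hk.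
    by rewrite (nth_map [::]) //; move: (is_refl_conj (finv b) (Hpre k Hk)); rewrite finvK.
  rewrite flatten_cat; apply: pres_trans (pres_eq_cat (flatten_conj b pre) (pres_refl _ _)) _.
  rewrite -!catA; apply: pres_eq_cat (pres_refl _ _) _.
  by apply: pres_trans Ha; rewrite !flatten_cat; apply: pres_refl.
move=> ts Hts.
have : T_decomp m a (mid ++ ts).
  apply: (@T_decomp_cox_eq (b ++ finv b ++ a)); first exact: pres_eq_catKV.
  exact/T_decomp_cat/Hts/T_decomp_flatten.
by move/min_a; rewrite !size_cat addnCA leq_add2l.
Qed.

End Blocks.

Lemma le_T_mem a ts t : red_T m a ts -> t \in ts -> le_T m t a.
Proof.
move=> red_a t_in; case/splitPr: t_in red_a => pre post.
by rewrite -[t :: post]/([:: t] ++ post) => /le_T_block; rewrite /= cats0.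
Qed.

Lemma red_T_replace a pre mid mid' post :
  red_T m a (pre ++ mid ++ post) -> all_refl mid' -> size mid' = size mid ->
  CE (flatten mid') (flatten mid) -> red_T m a (pre ++ mid' ++ post).
Proof.
move=> red_a Hmid' eq_size Hprod.
apply: (red_T_same_size red_a); last by rewrite !size_cat eq_size.
have [[/all_refl_cat [Hpre /all_refl_cat [_ Hpost]] Ha] _] := red_a.
split; first by apply/all_refl_cat; split=> //; apply/all_refl_cat.
apply: pres_trans Ha; rewrite !flatten_cat.
exact/pres_eq_cat/pres_eq_cat/pres_refl/Hprod/pres_refl.
Qed.

End ReflectionFactorisations.

Section MatrixFacts.
Local Open Scope ring_scope.
Variable F : fieldType.

Lemma mxrank_mxsub m1 n1 m2 n2 (f : 'I_m2 -> 'I_m1) (g : 'I_n2 -> 'I_n1)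
    (A : 'M[F]_(m1, n1)) : (\rank (mxsub f g A) <= \rank A)%N.
Proof.
have -> : mxsub f g A = rowsub f 1%:M *m A *m colsub g 1%:M.
  by rewrite mul_rowsub_mx mul1mx mulmx_colsub mulmx1; apply/matrixP=> i j; rewrite !mxE.
exact: leq_trans (mxrankM_maxl _ _) (mxrankM_maxr _ _).
Qed.

Lemma mxrank_one_subM p (A B : 'M[F]_p) :
  (\rank (1%:M - A *m B)%R <= \rank (1%:M - A)%R + \rank (1%:M - B)%R)%N.
Proof.
have -> : (1%:M - A *m B = (1%:M - A) + A *m (1%:M - B))%R.
  by rewrite mulmxBr mulmx1 addrA subrK.
by apply: leq_trans (mxrank_add _ _) _; rewrite leq_add2l mxrankM_maxr.
Qed.

Lemma root_unity_sum (z : F) k : z ^+ k = 1 -> z != 1 -> \sum_(t < k) z ^+ t = 0.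
Proof.
move=> zk z1; apply/eqP; move: (subrX1 z k); rewrite zk subrr => /esym/eqP.
by rewrite mulf_eq0 subr_eq0 (negbTE z1).
Qed.

Lemma sum_expr_eigen p (M : 'M[F]_p) (v : 'cV[F]_p) c k :
  M *m v = c *: v -> (\sum_(t < k) M ^+ t) *m v = (\sum_(t < k) c ^+ t) *: v.
Proof.
move=> Mv; rewrite mulmx_suml scaler_suml; apply: eq_bigr => t _.
elim: (nat_of_ord t) => [|s IH]; first by rewrite expr0 mul1mx scale1r.
by rewrite exprS -mulmxE -mulmxA IH -scalemxAr Mv scalerA -exprSr.
Qed.

End MatrixFacts.

Section RingFacts.
Local Open Scope ring_scope.

Lemma expr_eq1_sum (R : pzRingType) (x : R) k :
  (\sum_(t < k) x ^+ t) * x = \sum_(t < k) x ^+ t -> x ^+ k = 1.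
Proof.
set G := \sum_(t < k) _ => Gx; apply/eqP; rewrite -subr_eq0 subrX1 -/G.
have commG : GRing.comm (x - 1) G.
  apply/commr_sym/commrB/commr1.
  by apply/commr_sym/commr_sum => t _; apply/commrX/commr_refl.
by rewrite commG mulrBr mulr1 Gx subrr.
Qed.

End RingFacts.

Section Representation.
Local Open Scope ring_scope.
Variables (n : nat) (m : 'I_n -> 'I_n -> option nat).
Notation N := (n + n)%N.

Definition zeta (k : nat) : algC := projT1 (C_prim_root_exists (ltn0Sn k.-1)).

Lemma zetaP k : (k.-1.+1).-primitive_root (zeta k).
Proof. by rewrite /zeta; case: C_prim_root_exists. Qed.

(* For m(s_i, s_j) = k finite, [cartan i j * cartan j i = 2 + zeta + zeta^-1], so that
   [refl_mx i *m refl_mx j] acts on span(root i, root j) with eigenvalues zeta^-1 and zeta,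
   zeta a primitive k-th root of unity. The representation need not be faithful. *)
Definition cartan (i j : 'I_n) : algC :=
  if i == j then 2 else
  if m i j is Some k then (if (i < j)%N then 1 + zeta k else 1 + (zeta k)^-1) else 0.

Definition root (i : 'I_n) : 'cV[algC]_N := delta_mx (lshift n i) 0.
Definition coroot (i : 'I_n) : 'rV[algC]_N := row_mx (\row_j cartan i j) (delta_mx 0 i).
(* The extra coordinates make [1 - rep h] contain a unitriangular n x n block
   (see [cox_h_corner_entry]), whatever the degeneracy of [cartan]. *)
Definition extra_vec (r : 'I_n) : 'cV[algC]_N := delta_mx (rshift n r) 0.
Definition refl_mx (i : 'I_n) : 'M[algC]_N := 1%:M - root i *m coroot i.
Definition rep (w : fword 'I_n) : 'M[algC]_N := foldr (fun p M => refl_mx p.1 *m M) 1%:M w.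

Lemma coroot_root i j : coroot i *m root j = (cartan i j)%:M.
Proof.
apply/matrixP=> a b; rewrite [a]ord1 [b]ord1 /root -colE.
by rewrite mxE /coroot row_mxEl !mxE eqxx mulr1n.
Qed.

Lemma coroot_extra_vec i r : coroot i *m extra_vec r = (i == r)%:R%:M.
Proof.
apply/matrixP=> a b; rewrite [a]ord1 [b]ord1 -colE.
by rewrite mxE /coroot row_mxEr !mxE eqxx eq_sym.
Qed.

Lemma rep_cat u v : rep (u ++ v) = rep u *m rep v.
Proof. by elim: u => [|p u IH] /=; rewrite ?mul1mx // IH mulmxA. Qed.

Lemma refl_mx_root i j : refl_mx i *m root j = root j - cartan i j *: root i.
Proof. by rewrite /refl_mx mulmxBl mul1mx -mulmxA coroot_root mul_mx_scalar. Qed.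

Lemma cartan_diag i : cartan i i = 2.
Proof. by rewrite /cartan eqxx. Qed.

Lemma refl_mxK i : refl_mx i *m refl_mx i = 1%:M.
Proof.
have sq : (root i *m coroot i) *m (root i *m coroot i) = 2 *: (root i *m coroot i).
  by rewrite mulmxA -(mulmxA (root i)) coroot_root cartan_diag mul_mx_scalar scalemxAl.
rewrite /refl_mx mulmxBr mulmx1 !mulmxBl !mul1mx sq.
by move: (root i *m coroot i) => X; apply/matrixP=> a b; rewrite !mxE; ring.
Qed.

Lemma refl_mx_pair_comb i j x y :
  (refl_mx i *m refl_mx j) *m (x *: root i + y *: root j) =
  (x * (cartan i j * cartan j i - 1) + y * cartan i j) *: root i
  + (- (x * cartan j i) - y) *: root j.
Proof.
rewrite -mulmxA !mulmxDr -!scalemxAr !refl_mx_root !mulmxBr -!scalemxAr !refl_mx_root.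
rewrite !cartan_diag; move: (root i) (root j) (cartan _ _) (cartan _ _) => P Q a b.
by apply/matrixP=> r c; rewrite !mxE; ring.
Qed.

Lemma refl_mx_pair_order i j k (l : algC) : (0 < k)%N -> l ^+ k = 1 -> l != 1 ->
  cartan i j = 1 + l -> cartan j i = 1 + l^-1 -> (refl_mx i *m refl_mx j) ^+ k = 1.
Proof.
move=> k_gt0 lk l1 cij cji.
have l0 : l != 0 by apply: contra_eq_neq lk => ->; rewrite expr0n gtn_eqF // eq_sym oner_eq0.
set mu := l^-1 in cji *.
have muk : mu ^+ k = 1 by rewrite exprVn lk invr1.
have mu1 : mu != 1 by rewrite invr_eq1.
set M := refl_mx i *m refl_mx j; set G := \sum_(t < k) M ^+ t.
set w1 := 1 *: root i + (-1) *: root j; set w2 := 1 *: root i + (- mu) *: root j.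
have Gw1 : G *m w1 = 0.
  rewrite (sum_expr_eigen (c := mu)) ?root_unity_sum ?scale0r //.
  rewrite refl_mx_pair_comb cij cji scalerDr !scalerA /mu.
  by congr (_ *: _ + _ *: _); field.
have Gw2 : G *m w2 = 0.
  rewrite (sum_expr_eigen (c := l)) ?root_unity_sum ?scale0r //.
  rewrite refl_mx_pair_comb cij cji scalerDr !scalerA /mu.
  by congr (_ *: _ + _ *: _); field.
have Gj : G *m root j = 0.
  have : (mu - 1) *: (G *m root j) = 0.
    rewrite scalemxAr; have -> : (mu - 1) *: root j = w1 - w2.
      by rewrite /w1 /w2; move: (root i) (root j) => P Q; apply/matrixP=> a b; rewrite !mxE; ring.
    by rewrite mulmxBr Gw1 Gw2 subrr.
  by move/eqP; rewrite scaler_eq0 subr_eq0 (negbTE mu1) => /eqP.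
have Gi : G *m root i = 0.
  have -> : root i = w1 + root j by rewrite /w1 scale1r scaleN1r addrNK.
  by rewrite mulmxDr Gw1 Gj addr0.
have G_refl p : G *m root p = 0 -> G *m refl_mx p = G.
  by move=> Gp; rewrite /refl_mx mulmxBr mulmx1 mulmxA Gp mul0mx subr0.
by apply: expr_eq1_sum; rewrite -/G -mulmxE /M mulmxA !G_refl.
Qed.

Lemma rep_nseq w k : rep (flatten (nseq k w)) = rep w ^+ k.
Proof. by elim: k => [|k IH] //=; rewrite rep_cat IH exprS. Qed.

Hypothesis Hm : coxeter_matrix m.

Lemma rep_cox_rel l r : cox_rel m l r -> rep l = rep r.
Proof.
case=> i [j [k [mij [-> ->]]]]; rewrite rep_nseq /= mulmx1.
have [eq_ij | ij] := eqVneq i j.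
  by move: mij; rewrite -eq_ij Hm.2.1 => [[<-]]; rewrite expr1 refl_mxK.
have k2 := Hm.2.2 i j k ij mij.
have mji : m j i = Some k by rewrite Hm.1.
have zk : k.-primitive_root (zeta k) by move: (zetaP k); rewrite prednK // ltnW.
have zk1 : zeta k ^+ k = 1 := prim_expr_order zk.
have z1 : zeta k != 1.
  by rewrite -[zeta k]expr1 -(prim_order_dvd zk) dvdn1 gtn_eqF.
have cij : cartan i j = if (i < j)%N then 1 + zeta k else 1 + (zeta k)^-1.
  by rewrite /cartan (negbTE ij) mij.
have cji : cartan j i = if (j < i)%N then 1 + zeta k else 1 + (zeta k)^-1.
  by rewrite /cartan eq_sym (negbTE ij) mji.
have k_gt0 : (0 < k)%N by rewrite ltnW.
case: ltngtP cij cji => [lt_ij | lt_ji | /val_inj eq_ij] cij cji.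
- exact: (refl_mx_pair_order (l := zeta k)).
- apply: (refl_mx_pair_order (l := (zeta k)^-1)); rewrite ?invrK //.
    by rewrite exprVn zk1 invr1.
  by rewrite invr_eq1.
- by rewrite eq_ij eqxx in ij.
Qed.

Lemma rep_cox_eq u v : cox_eq m u v -> rep u = rep v.
Proof.
elim=> {u v} // [u v w _ -> _ -> // | u v i b | u v l r Hr].
- by rewrite !rep_cat /= (mulmxA (refl_mx i)) refl_mxK mul1mx.
- by rewrite !rep_cat (rep_cox_rel Hr).
Qed.

Lemma rep_finv x : rep x *m rep (finv x) = 1%:M.
Proof.
elim: x => [|p x IH] /=; first by rewrite mulmx1.
by rewrite finv_cons rep_cat /= mulmx1 -mulmxA (mulmxA (rep x)) IH mul1mx refl_mxK.
Qed.

Lemma rank_one_sub_rep_refl t : is_refl m t -> (\rank (1%:M - rep t)%R <= 1)%N.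
Proof.
case=> x [i /rep_cox_eq <-].
have -> : 1%:M - rep (x ++ (i, true) :: finv x) = (rep x *m root i) *m (coroot i *m rep (finv x)).
  rewrite rep_cat /= -{1}(rep_finv x) /refl_mx mulmxBl mul1mx mulmxBr opprB addrC subrK.
  by rewrite !mulmxA.
exact: leq_trans (mxrankM_maxl _ _) (rank_leq_col _).
Qed.

Lemma rank_one_sub_rep_T_decomp a ts : T_decomp m a ts -> (\rank (1%:M - rep a)%R <= size ts)%N.
Proof.
case=> + /rep_cox_eq <-; elim: ts => [|t ts IH] /=; first by rewrite subrr mxrank0.
case/all_refl_cons => Ht Hts; rewrite rep_cat.
by apply: leq_trans (mxrank_one_subM _ _) _; rewrite -add1n leq_add ?rank_one_sub_rep_refl ?IH.
Qed.

Lemma refl_mx_coord i (v : 'cV[algC]_N) j : j != lshift n i -> (refl_mx i *m v) j 0 = v j 0.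
Proof.
move=> ji; rewrite /refl_mx mulmxBl mul1mx -mulmxA !mxE big_ord1 !mxE (negbTE ji).
by rewrite mul0r subr0.
Qed.

Lemma rep_coord w (v : 'cV[algC]_N) j :
  all (fun p => j != lshift n p.1) w -> (rep w *m v) j 0 = v j 0.
Proof.
elim: w => [|p w IH] /=; first by rewrite mul1mx.
by case/andP=> jp /IH <-; rewrite -mulmxA refl_mx_coord.
Qed.

Lemma rep_extra_vec w r : all (fun p => p.1 != r) w -> rep w *m extra_vec r = extra_vec r.
Proof.
elim: w => [|p w IH] /=; first by rewrite mul1mx.
case/andP=> pr /IH; rewrite -mulmxA => ->.
by rewrite /refl_mx mulmxBl mul1mx -mulmxA coroot_extra_vec (negbTE pr) mul_mx_scalar scale0r subr0.
Qed.

Lemma cox_h_split (r : 'I_n) : exists pre post,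
  [/\ cox_h n = pre ++ (r, true) :: post, all (fun p : 'I_n * bool => (p.1 < r)%N) pre
    & all (fun p => p.1 != r) post].
Proof.
set e := enum 'I_n; have r_e : r \in e by rewrite mem_enum.
have nth_r : nth r e r = r by apply: val_inj; rewrite /= nth_enum_ord.
have split_e : e = take r e ++ r :: drop r.+1 e.
  by rewrite -{2}nth_r -drop_nth ?cat_take_drop // size_enum_ord.
exists (map (fun i => (i, true)) (take r e)), (map (fun i => (i, true)) (drop r.+1 e)).
split; first by rewrite /cox_h -/e {1}split_e map_cat.
- rewrite all_map; apply/allP=> i /= i_take.
  have : val i \in take r (map val e) by rewrite -map_take map_f.
  by rewrite val_enum_ord take_iota mem_iota add0n leq_min => /andP [_ /andP []].
- rewrite all_map; apply/allP=> i /= i_drop; apply: contraTneq i_drop => ->.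
  by move: (enum_uniq 'I_n); rewrite -/e {1}split_e cat_uniq /= => /and3P [_ _ /andP []].
Qed.

Lemma cox_h_corner_entry (j r : 'I_n) : (r <= j)%N ->
  (1%:M - rep (cox_h n)) (lshift n j) (rshift n r) = (j == r)%:R.
Proof.
move=> le_rj; have [pre [post [-> pre_lt post_neq]]] := cox_h_split r.
set f := extra_vec r.
have -> : (1%:M - rep (pre ++ (r, true) :: post)) (lshift n j) (rshift n r) =
    ((1%:M - rep (pre ++ (r, true) :: post)) *m f) (lshift n j) 0.
  by rewrite /f /extra_vec -colE [RHS]mxE.
rewrite mulmxBl mul1mx rep_cat /= -!mulmxA.
rewrite rep_extra_vec // /refl_mx mulmxBl mul1mx -mulmxA coroot_extra_vec eqxx.
rewrite mul_mx_scalar scale1r [LHS]mxE [in X in _ + X]mxE rep_coord; last first.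
  apply/allP=> p /(allP pre_lt) lt_pr; rewrite (inj_eq (@lshift_inj _ _)).
  by apply: contraTneq lt_pr => <-; rewrite -leqNgt.
by rewrite !mxE opprB addrC subrK (inj_eq (@lshift_inj _ _)) andbT.
Qed.

Lemma rank_one_sub_rep_cox_h : (n <= \rank (1%:M - rep (cox_h n))%R)%N.
Proof.
set T := mxsub (lshift n) (@rshift n n) (1%:M - rep (cox_h n)) : 'M[algC]_n.
have T_entry (j r : 'I_n) : (r <= j)%N -> T j r = (j == r)%:R.
  by move=> le_rj; rewrite /T mxE cox_h_corner_entry.
have rankT : \rank T = n.
  rewrite mxrank_unit // unitmxE -det_tr det_trig.
    rewrite (eq_bigr (fun=> 1)) ?prodr_const ?expr1n ?unitr1 // => i _.
    by rewrite mxE T_entry // eqxx.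
  apply/is_trig_mxP=> i j lt_ij; rewrite mxE T_entry ?(ltnW lt_ij) //.
  by rewrite -val_eqE /= gtn_eqF.
by rewrite -[X in (X <= _)%N]rankT; apply: mxrank_mxsub.
Qed.

Lemma T_decomp_cox_h_size ts : T_decomp m (cox_h n) ts -> (n <= size ts)%N.
Proof. by move/rank_one_sub_rep_T_decomp; apply: leq_trans rank_one_sub_rep_cox_h. Qed.

End Representation.

Section SimpleReflections.
Variables (n : nat) (m : 'I_n -> 'I_n -> option nat).

Lemma flatten_sgen : flatten (sgen n) = cox_h n.
Proof. by rewrite /sgen /cox_h; elim: (enum 'I_n) => //= i s ->. Qed.

Lemma nth_sgen (i : 'I_n) : nth [::] (sgen n) i = [:: (i, true)].
Proof. by rewrite /sgen (nth_map i) ?size_enum_ord // nth_ord_enum. Qed.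

Lemma size_sgen : size (sgen n) = n.
Proof. by rewrite size_map size_enum_ord. Qed.

Lemma is_refl_letter (i : 'I_n) : is_refl m [:: (i, true)].
Proof. by exists [::], i; apply: pres_refl. Qed.

Lemma red_T_sgen : coxeter_matrix m -> red_T m (cox_h n) (sgen n).
Proof.
move=> Hm; split; last by move=> ts /(T_decomp_cox_h_size Hm); rewrite size_sgen.
rewrite -{1}flatten_sgen; apply: T_decomp_flatten => k; rewrite size_sgen => lt_kn.
by rewrite -[k]/(val (Ordinal lt_kn)) nth_sgen; apply: is_refl_letter.
Qed.

End SimpleReflections.

Section DualArtin.
Variables (n : nat) (m : 'I_n -> 'I_n -> option nat).
Hypothesis h_red : red_T m (cox_h n) (sgen n).
Notation CE := (cox_eq m).
Notation DE := (@dual_eq n m).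
Notation D := (dgen m).
Notation word := (fword 'I_n).

Lemma dual_eq_letter (g g' : D) : CE (sval g) (sval g') -> DE [:: (g, true)] [:: (g', true)].
Proof.
move=> gg'; have rel : dual_rel [:: (g, true)] [:: (g', true)] by left; exists g, g'.
exact: (pres_rel [::] [::] rel).
Qed.

Lemma dual_eq_hurwitz (ga gb g1 g2 : D) pre post :
  red_T m (cox_h n) (pre ++ [:: sval ga; sval gb] ++ post) ->
  CE (sval g1 ++ sval g2) (sval ga ++ sval gb) ->
  DE [:: (ga, true); (gb, true)] [:: (g1, true); (g2, true)].
Proof.
move=> red_h prod.
have red_ab := red_T_block red_h; have le_ab := le_T_block red_h.
have rel : dual_rel [:: (ga, true); (gb, true)] [:: (g1, true); (g2, true)].
  right; exists (flatten [:: sval ga; sval gb]), [:: ga; gb], [:: g1; g2].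
  split=> //; split=> //; split=> //.
  apply: (red_T_same_size red_ab) => //; split; last by rewrite /= !cats0.
  by case=> [|[|k]] //= _; [case: (proj2_sig g1) | case: (proj2_sig g2)].
exact: (pres_rel [::] [::] rel).
Qed.

Lemma le_T_letter (i : 'I_n) : le_T m [:: (i, true)] (cox_h n).
Proof. by apply: le_T_mem h_red _; rewrite /sgen map_f ?mem_enum. Qed.

Definition dletter (i : 'I_n) : D := exist _ [:: (i, true)] (conj (is_refl_letter m i) (le_T_letter i)).

Definition psi_word (u : word) : fword D := map_word dletter u.

Lemma psi_rel_psi_word u : psi_rel u (psi_word u).
Proof. by rewrite /psi_rel /psi_word /map_word -map_comp. Qed.

Definition psi_gen (u : word) (g : D) := CE (sval g) u /\ DE (psi_word u) [:: (g, true)].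

Definition hurwitz_inv (us : seq word) :=
  exists gs : seq D, List.Forall2 psi_gen us gs /\ red_T m (cox_h n) (map sval gs).

Lemma is_refl_hurwitz_pair c a b : is_refl m a -> is_refl m b ->
  is_refl m (hurwitz_pair c a b).1 /\ is_refl m (hurwitz_pair c a b).2.
Proof.
move=> ra rb; case: c => /=; split=> //; first exact: is_refl_conj.
by rewrite -[X in _ ++ _ ++ X]finvK; apply: is_refl_conj.
Qed.

Lemma hurwitz_inv_step c pre a b post :
  hurwitz_inv (pre ++ a :: b :: post) ->
  hurwitz_inv (pre ++ (hurwitz_pair c a b).1 :: (hurwitz_pair c a b).2 :: post).
Proof.
case=> gs [/List.Forall2_app_inv_l [preG [gs2 [Fpre [F2 ->]]]] red_h].
case: gs2 F2 red_h => [|ga [|gb postG]]; try by move/Forall2_size.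
case/List.Forall2_cons_iff=> [[CEa DEa] /List.Forall2_cons_iff [[CEb DEb] Fpost]].
rewrite map_cat -[map _ (_ :: _ :: _)]/([:: sval ga; sval gb] ++ map sval postG) => red_h.
set x := (hurwitz_pair c (sval ga) (sval gb)).1; set y := (hurwitz_pair c (sval ga) (sval gb)).2.
have [rx ry] : is_refl m x /\ is_refl m y.
  by apply: is_refl_hurwitz_pair; [case: (proj2_sig ga) | case: (proj2_sig gb)].
have red_xy : red_T m (cox_h n) (map sval preG ++ [:: x; y] ++ map sval postG).
  apply: (red_T_replace red_h) => //; last by rewrite /= !cats0; apply: hurwitz_pair_prod.
  by apply/all_refl_cons; split=> //; apply/all_refl_cons.
have le_x : le_T m x (cox_h n) by apply: le_T_mem red_xy _; rewrite !mem_cat !inE eqxx orbT.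
have le_y : le_T m y (cox_h n) by apply: le_T_mem red_xy _; rewrite !mem_cat !inE eqxx !orbT.
pose g1 : D := exist _ x (conj rx le_x); pose g2 : D := exist _ y (conj ry le_y).
have DE12 : DE ([:: (ga, true)] ++ [:: (gb, true)]) ([:: (g1, true)] ++ [:: (g2, true)]).
  exact: (@dual_eq_hurwitz ga gb g1 g2 _ _ red_h (hurwitz_pair_prod _ _ _ _)).
(* [g2] (resp. [g1]) carries the same word as [ga] (resp. [gb]) but is a different element
   of the subtype: the first family of relations of Art* identifies them. *)
have fixed : if c then DE [:: (g2, true)] [:: (ga, true)] else DE [:: (g1, true)] [:: (gb, true)].
  by destruct c; apply: dual_eq_letter; apply: pres_refl.
have [CE1 CE2] := hurwitz_pair_congr c CEa CEb.
have [DE1 DE2] := hurwitz_pair_congr c DEa DEb.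
have [DE1' DE2'] := hurwitz_pair_solve DE12 fixed.
rewrite /psi_word map_word_hurwitz_pair /= in DE1 DE2.
exists (preG ++ g1 :: g2 :: postG); split; last by rewrite map_cat.
apply: List.Forall2_app Fpre (List.Forall2_cons _ _ _ (List.Forall2_cons _ _ _ Fpost)).
  by split; [apply: CE1 | apply: pres_trans DE1 DE1'].
by split; [apply: CE2 | apply: pres_trans DE2 DE2'].
Qed.

Lemma hurwitz_inv_sgen : hurwitz_inv (sgen n).
Proof.
exists (map dletter (enum 'I_n)); split; last by rewrite -map_comp.
by rewrite /sgen; elim: (enum 'I_n) => //= i s IH; constructor=> //; split; apply: pres_refl.
Qed.

Lemma hurwitz_inv_size us : hurwitz_inv us -> size us = n.
Proof.
case=> gs [/Forall2_size -> red_gs].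
by rewrite -(size_map sval) (red_T_size red_gs h_red) size_sgen.
Qed.

Lemma hurwitz_inv_nth us k : hurwitz_inv us -> k < size us ->
  exists g, psi_gen (nth [::] us k) g.
Proof. by case=> gs [Fus _]; apply: Forall2_nth_ex Fus. Qed.

Lemma hurwitz_inv_hact beta :
  all (fun p => p.1.+1 < n) beta -> hurwitz_inv (hact beta (sgen n)).
Proof.
elim: beta => [_|[i c] beta IH /= /andP [lt_in /IH inv_us]]; first exact: hurwitz_inv_sgen.
move: inv_us (hurwitz_inv_size inv_us); set us := hact beta _ => inv_us size_us.
have [pre [a [b [post [us_eq <-]]]]] :
    exists pre a b post, us = pre ++ a :: b :: post /\ size pre = i.
  have lt_i1 : i.+1 < size us by rewrite size_us.
  exists (take i us), (nth [::] us i), (nth [::] us i.+1), (drop i.+2 us).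
  split; last exact: size_takel (ltnW (ltnW lt_i1)).
  by rewrite -(drop_nth [::] lt_i1) -(drop_nth [::] (ltnW lt_i1)) cat_take_drop.
by move: inv_us; rewrite us_eq hstep_cat; apply: hurwitz_inv_step.
Qed.

End DualArtin.

Theorem proposition3p8 (n : nat) (m : 'I_n -> 'I_n -> option nat) :
  coxeter_matrix m -> psi_iso m -> well_stabilized m.
Proof.
move=> Hm [psi_inj _] beta beta_ok; have h_red := red_T_sgen Hm.
split=> -[size_eq entry_eq]; split=> // k lt_k.
- have [g [g_W g_dual]] := hurwitz_inv_nth (hurwitz_inv_hact h_red beta_ok) lt_k.
  have lt_kn : k < n by rewrite -(size_sgen n) -size_eq.
  move: (entry_eq k lt_k).
  rewrite -[k in nth _ (sgen n) k]/(val (Ordinal lt_kn)) nth_sgen => k_W.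
  apply: (psi_inj _ _ _ _ (psi_rel_psi_word h_red _) (psi_rel_psi_word h_red _)).
  apply: (pres_trans g_dual); apply: dual_eq_letter; exact: pres_trans g_W k_W.
- exact: (art_eq_cox_eq Hm (entry_eq k lt_k)).
Qed.
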